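(* Let $n\ge1$ be an integer, $x$ an indeterminate, and let $A$ be the $n\times n$ matrix with entries $A_{ij}=(1-x^i)^{n+1-j}(1-x^{i+1})^{n+1-j}x^{i(j-1)}$ for $1\le i,j\le n$. Then $$\det A=(-1)^{\frac{n(n-1)}{2}}x^{\frac{n(n^2-1)}{6}}\prod_{k=1}^{n}(1-x^{2k-1})^{n+1-k}(1-x^{2k})^{n+1-k}.$$ *)

From mathcomp Require Import all_boot all_order all_algebra.
Set Implicit Arguments. Unset Strict Implicit. Unset Printing Implicit Defensive.
Import GRing.Theory.
Local Open Scope ring_scope.

(* The matrix A of the paper, over integer polynomials {poly int} in x = 'X.
   Paper indices i,j in 1..n correspond to i.+1, j.+1 for i,j : 'I_n. *)
Definition matA (n : nat) : 'M[{poly int}]_n :=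
  \matrix_(i < n, j < n)
    ((1 - 'X^(i.+1)) ^+ (n + 1 - j.+1) * (1 - 'X^(i.+2)) ^+ (n + 1 - j.+1)
      * 'X^(i.+1 * j)).

(* Pulling the factor alpha_i = (1 - x^(i+1)) (1 - x^(i+2)) out of row i leaves
   the homogeneous Vandermonde matrix (alpha_i^(n-1-j) (x^(i+1))^j), whose
   determinant is the product over i < j of the minors
   alpha_i x^(j+1) - alpha_j x^(i+1) = - x^(i+1) (1 - x^(j-i)) (1 - x^(i+j+3)).
   Together with alpha_n, the minors of a new last column n contribute
   (1 - x^m) exactly once for every m = 1 .. 2n+2, i.e. one more copy of each
   factor (1 - x^(2k-1)) (1 - x^(2k)), k <= n+1, which yields the exponents
   n+1-k by induction. *)

From mathcomp Require Import all_boot all_order all_algebra.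
From mathcomp Require Import ring zify.
Set Implicit Arguments. Unset Strict Implicit. Unset Printing Implicit Defensive.
Import GRing.Theory.
Local Open Scope ring_scope.

Section ProdLt.
Variable R : comPzRingType.

Definition prod_lt n (f : nat -> nat -> R) : R := \prod_(j < n) \prod_(i < j) f i j.

Lemma prod_ltS n f : prod_lt n.+1 f = prod_lt n f * \prod_(i < n) f i n.
Proof. by rewrite /prod_lt big_ord_recr. Qed.

Lemma prod_ltM n f g :
  prod_lt n (fun i j => f i j * g i j) = prod_lt n f * prod_lt n g.
Proof. by rewrite /prod_lt -big_split; apply: eq_bigr => j _; rewrite big_split. Qed.

Lemma eq_prod_lt n f g :
  (forall i j, (i < j < n)%N -> f i j = g i j) -> prod_lt n f = prod_lt n g.
Proof.
move=> efg; rewrite /prod_lt; apply: eq_bigr => j _; apply: eq_bigr => i _.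
by apply: efg; rewrite !ltn_ord.
Qed.

Lemma prod_lt_ord n (f : nat -> nat -> R) :
  \prod_(i < n) \prod_(j < n | (i < j)%N) f i j = prod_lt n f.
Proof.
rewrite (exchange_big_dep xpredT) //; apply: eq_bigr => j _.
by rewrite (big_ord_widen n (f^~ j) (ltnW (ltn_ord j))).
Qed.

Lemma prod_lt_mul (a : nat -> R) n :
  prod_lt n (fun i j => a i * a j) = \prod_(i < n) a i ^+ n.-1.
Proof.
elim: n => [|n IHn]; first by rewrite /prod_lt !big_ord0.
rewrite prod_ltS IHn big_split /= prodr_const card_ord big_ord_recr /= mulrA.
congr (_ * _); rewrite -big_split; apply: eq_bigr => i _.
by rewrite /= -exprSr prednK // (leq_ltn_trans _ (ltn_ord i)).
Qed.

End ProdLt.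

Lemma det_homVandermonde_field (F : fieldType) n (a b : nat -> F) :
  (forall i, a i != 0) ->
  \det (\matrix_(i < n, j < n) (a i ^+ (n - j.+1) * b i ^+ j)) =
  prod_lt n (fun i j => a i * b j - a j * b i).
Proof.
move=> a_neq0; pose t : 'rV_n := \row_j (b j / a j).
have -> : \matrix_(i < n, j < n) (a i ^+ (n - j.+1) * b i ^+ j) =
          diag_mx (\row_i a i ^+ n.-1) *m (Vandermonde n t)^T.
  apply/matrixP => i j; rewrite mul_diag_mx !mxE expr_div_n.
  have -> : (n - j.+1 = n.-1 - j)%N by lia.
  rewrite expfB_cond ?(negbTE (a_neq0 i)) //; last by have := ltn_ord j; lia.
  by field; rewrite expf_neq0.
rewrite det_mulmx det_diag det_tr det_Vandermonde.
under eq_bigr do rewrite mxE.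
have -> : \prod_(i < n) \prod_(j < n | (i < j)%N) (t 0 j - t 0 i) =
          prod_lt n (fun i j => b j / a j - b i / a i).
  by rewrite -prod_lt_ord; apply: eq_bigr => i _; apply: eq_bigr => j _; rewrite !mxE.
rewrite -prod_lt_mul -prod_ltM; apply: eq_prod_lt => i j _.
by field; rewrite !a_neq0.
Qed.

Lemma det_homVandermonde (R : idomainType) n (a b : nat -> R) :
  (forall i, a i != 0) ->
  \det (\matrix_(i < n, j < n) (a i ^+ (n - j.+1) * b i ^+ j)) =
  prod_lt n (fun i j => a i * b j - a j * b i).
Proof.
move=> a_neq0; apply/eqP; rewrite -tofrac_eq -det_map_mx.
have -> : map_mx (@tofrac R) (\matrix_(i < n, j < n) (a i ^+ (n - j.+1) * b i ^+ j)) =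
          \matrix_(i < n, j < n) (tofrac (a i) ^+ (n - j.+1) * tofrac (b i) ^+ j).
  by apply/matrixP => i j; rewrite !mxE rmorphM !rmorphXn.
rewrite (@det_homVandermonde_field _ n (fun i => tofrac (a i)) (fun i => tofrac (b i))).
  rewrite /prod_lt rmorph_prod; apply/eqP/eq_bigr => j _.
  by rewrite rmorph_prod; apply: eq_bigr => i _; rewrite rmorphB !rmorphM.
by move=> i; rewrite tofrac_eq0.
Qed.

Lemma det_mul_rows (R : comPzRingType) n (c : 'I_n -> R) (f : 'I_n -> 'I_n -> R) :
  \det (\matrix_(i, j) (c i * f i j)) = \prod_i c i * \det (\matrix_(i, j) f i j).
Proof.
have -> : \matrix_(i, j) (c i * f i j) = diag_mx (\row_i c i) *m \matrix_(i, j) f i j.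
  by rewrite mul_diag_mx; apply/matrixP => i j; rewrite !mxE.
by rewrite det_mulmx det_diag; under eq_bigr do rewrite mxE.
Qed.

Lemma prodr_exprS (R : comPzRingType) (x : R) n :
  \prod_(i < n) x ^+ i.+1 = x ^+ 'C(n.+1, 2).
Proof.
elim: n => [|n IHn]; first by rewrite big_ord0.
by rewrite big_ord_recr /= IHn -exprD (binS n.+1 1) bin1.
Qed.

Lemma prodr_pairs (R : comPzRingType) (f : nat -> R) N :
  \prod_(m < N.*2) f m = \prod_(i < N) (f i.*2 * f i.*2.+1).
Proof.
elim: N => [|N IHN]; first by rewrite !big_ord0.
by rewrite doubleS !big_ord_recr /= IHN mulrA.
Qed.

Lemma prodr_expr_subnS (R : comPzRingType) (F : nat -> R) n :
  \prod_(i < n.+1) F i ^+ (n.+1 - i) =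
  \prod_(i < n) F i ^+ (n - i) * \prod_(i < n.+1) F i.
Proof.
rewrite [in LHS]big_ord_recr [in RHS]big_ord_recr /= subSnn expr1 mulrA.
congr (_ * _); rewrite -big_split; apply: eq_bigr => i _ /=.
by rewrite subSn ?exprSr // ltnW.
Qed.

Lemma bin2E_divn n : 'C(n, 2) = ((n * (n - 1)) %/ 2)%N.
Proof. by rewrite bin2 subn1 divn2. Qed.

Lemma bin3E_divn n : 'C(n.+1, 3) = ((n * (n ^ 2 - 1)) %/ 6)%N.
Proof.
rewrite bin_ffactd; congr divn.
by rewrite !ffactnS ffactn0; case: n => [|n] //=; nia.
Qed.

Definition one_subXn (m : nat) : {poly int} := 1 - 'X^m.

Definition alpha (i : nat) : {poly int} := one_subXn i.+1 * one_subXn i.+2.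

Lemma alpha_neq0 i : alpha i != 0.
Proof.
have one_subXn_neq0 m : (0 < m)%N -> one_subXn m != 0.
  move=> m_gt0; rewrite /one_subXn subr_eq0; apply/eqP.
  by move=> /(congr1 (size : {poly int} -> nat)); rewrite size_polyXn size_poly1 => -[]; lia.
by rewrite mulf_neq0 ?one_subXn_neq0.
Qed.

Lemma alpha_X_cross i j : (i < j)%N ->
  alpha i * 'X^(j.+1) - alpha j * 'X^(i.+1) =
  - ('X^(i.+1) * (one_subXn (j - i) * one_subXn (i + j).+3)).
Proof.
move=> /ltnW /subnKC <-; set d := (j - i)%N.
rewrite /alpha /one_subXn addKn.
have -> : ((i + (i + d)).+3 = i.+1 + i.+2 + d)%N by lia.
rewrite -!addSn !exprD; ring.
Qed.

Lemma alpha_X_cross_column n :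
  alpha n * \prod_(i < n) (alpha i * 'X^(n.+1) - alpha n * 'X^(i.+1)) =
  (-1) ^+ n * 'X^('C(n.+1, 2)) * \prod_(m < n.*2.+2) one_subXn m.+1.
Proof.
under eq_bigr => i _ do rewrite (alpha_X_cross (ltn_ord i)).
rewrite prodrN card_ord !big_split /= prodr_exprS.
have -> : \prod_(i < n) one_subXn (n - i) = \prod_(i < n) one_subXn i.+1.
  rewrite -(big_mkord xpredT (fun i => one_subXn i.+1)) big_rev_mkord subn0.
  by apply: eq_bigr => i _; rewrite subnSK.
have -> : \prod_(i < n) one_subXn (i + n).+3 = \prod_(i < n) one_subXn (n.+2 + i).+1.
  by apply: eq_bigr => i _; rewrite addnC.
have -> : (n.*2.+2 = n.+2 + n)%N by rewrite -addnn.
by rewrite big_split_ord /= !big_ord_recr /= /alpha; ring.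
Qed.

Lemma alpha_X_cross_prod n :
  \prod_(i < n) alpha i * prod_lt n (fun i j => alpha i * 'X^(j.+1) - alpha j * 'X^(i.+1)) =
  (-1) ^+ 'C(n, 2) * 'X^('C(n.+1, 3)) *
    \prod_(i < n) (one_subXn i.*2.+1 * one_subXn i.*2.+2) ^+ (n - i).
Proof.
elim: n => [|n IHn]; first by rewrite /prod_lt !big_ord0 !mulr1.
rewrite big_ord_recr prod_ltS /= mulrACA IHn alpha_X_cross_column.
rewrite (prodr_expr_subnS (fun i => one_subXn i.*2.+1 * one_subXn i.*2.+2)).
rewrite -(prodr_pairs (fun m => one_subXn m.+1)) doubleS.
have -> : (-1) ^+ 'C(n.+1, 2) = (-1) ^+ 'C(n, 2) * (-1) ^+ n :> {poly int}.
  by rewrite binS bin1 exprD.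
have -> : 'X^'C(n.+2, 3) = 'X^'C(n.+1, 3) * 'X^'C(n.+1, 2) :> {poly int}.
  by rewrite -exprD.
ring.
Qed.

Lemma matA_homVandermonde n :
  matA n = \matrix_(i, j) (alpha i * (alpha i ^+ (n - j.+1) * 'X^(i.+1) ^+ j)).
Proof.
apply/matrixP => i j; rewrite !mxE /alpha /one_subXn.
by rewrite -exprMn mulrA -exprS exprM addn1 subSn.
Qed.

Theorem lemma2p8 (n : nat) (hn : (1 <= n)%N) :
  \det (matA n) =
    (-1) ^+ ((n * (n - 1)) %/ 2) * 'X^((n * (n ^ 2 - 1)) %/ 6)
    * \prod_(1 <= k < n.+1)
        ((1 - 'X^(2 * k - 1)) ^+ (n + 1 - k) * (1 - 'X^(2 * k)) ^+ (n + 1 - k)).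
Proof.
rewrite matA_homVandermonde (det_mul_rows (fun i : 'I_n => alpha i)).
rewrite (@det_homVandermonde _ n alpha (fun i => 'X^(i.+1))); last exact: alpha_neq0.
rewrite alpha_X_cross_prod -bin2E_divn -bin3E_divn big_add1 big_mkord /=.
congr (_ * _); apply: eq_bigr => i _.
by rewrite -exprMn addn1 subSS /one_subXn !mul2n doubleS subn1.
Qed.
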